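(* Let $f\colon\mathbb{R}\to\mathbb{R}$ be locally Lipschitz continuous and let $\phi_\pm\in\mathbb{R}$ with $\phi_-<0<\phi_+$. Suppose $f(\phi_+)=f(\phi_-)$ and $f(z)-f(\phi_\pm)<0$ for all $z\in(\phi_-,\phi_+)$. Then for each $\kappa\in(f(0),f(\phi_\pm))$ there exists a constant $R>0$ such that for every $\delta\in(0,\kappa-f(0))$ there exist $\tilde f\in C^\infty(\mathbb{R})$ and $\psi_\pm\in(\phi_-,\phi_+)$ with $\psi_-<0<\psi_+$ such that: (i) $\tilde f(\phi_+)=\tilde f(\phi_-)$, $\tilde f'(\phi_\pm)\neq0$, and $\tilde f(z)-\tilde f(\phi_\pm)<0$ for all $z\in(\phi_-,\phi_+)$; (ii) $\tilde f(\psi_+)=\kappa=\tilde f(\psi_-)$, $\tilde f'(\psi_\pm)\neq0$, and $\tilde f(z)-\tilde f(\psi_\pm)<0$ for all $z\in(\psi_-,\psi_+)$; (iii) $|f(z)-\tilde f(z)|<\delta$ and $|\tilde f'(z)|<R$ for all $z\in[\phi_-,\phi_+]$. *)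

From Stdlib Require Import Reals.
From Coquelicot Require Export Coquelicot.
Open Scope R_scope.

Definition locally_lipschitz (f : R -> R) : Prop :=
  forall x : R, exists r : R, 0 < r /\ exists L : R,
    forall y z : R, Rabs (y - x) < r -> Rabs (z - x) < r ->
      Rabs (f y - f z) <= L * Rabs (y - z).

Definition smooth (f : R -> R) : Prop :=
  forall (n : nat) (x : R), ex_derive (Derive_n f n) x.

(* On [phim, phip] the function f is Lipschitz, say with constant L, and the
   level kappa is crossed at points tm < 0 < tp with f < kappa in between.
   Lower f by tau and take the maximum with four tents of a slope sg > L passing
   through (phim, f phim), (tm, kappa), (tp, kappa) and (phip, f phip): the
   result g is sg-Lipschitz, tau-close to f, affine with slope -sg or sg near
   each of the four points, and a margin below the levels f phip and kappa in
   between.  A Bernstein polynomial of g of high degree is smooth, uniformly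
   close to g, has derivative bounded by sg, and, because Bernstein operators
   are local, has derivative within sg / 2 of -sg or sg near the four points.
   Strict monotonicity there and closeness elsewhere give (i) and (ii), and
   since sg depends only on f and kappa, R = sg + 1 works for every delta. *)

From Stdlib Require Import Reals Lra Lia Classical.
From Coquelicot Require Import Coquelicot.
Open Scope R_scope.

(** * Bernstein polynomials *)

(* De Casteljau's recursion for sum_k C(n, k) u^k (1 - u)^(n - k) h k. *)
Fixpoint bernstein (n : nat) (h : nat -> R) (u : R) : R :=
  match n with
  | O => h O
  | S m => (1 - u) * bernstein m h u + u * bernstein m (fun k => h (S k)) u
  end.

Lemma bernstein_ext n h h' u :
  (forall k, (k <= n)%nat -> h k = h' k) -> bernstein n h u = bernstein n h' u.
Proof.
  revert h h'; induction n as [|n IH]; intros h h' E; simpl.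
  - apply E; lia.
  - rewrite (IH h h'), (IH (fun k => h (S k)) (fun k => h' (S k))); auto;
      intros k Hk; apply E; lia.
Qed.

Lemma bernstein_lin n a b h h' u :
  bernstein n (fun k => a * h k + b * h' k) u = a * bernstein n h u + b * bernstein n h' u.
Proof.
  revert h h'; induction n as [|n IH]; intros h h'; simpl; [reflexivity|].
  rewrite IH, (IH (fun k => h (S k))); ring.
Qed.

Lemma bernstein_scal n c h u : bernstein n (fun k => c * h k) u = c * bernstein n h u.
Proof.
  rewrite (bernstein_ext n _ (fun k => c * h k + 0 * h k)) by (intros; ring).
  rewrite bernstein_lin; ring.
Qed.

Lemma bernstein_const n c u : bernstein n (fun _ => c) u = c.
Proof. induction n as [|n IH]; simpl; [|rewrite IH]; ring. Qed.

Lemma bernstein_le n h h' u : 0 <= u <= 1 ->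
  (forall k, (k <= n)%nat -> h k <= h' k) -> bernstein n h u <= bernstein n h' u.
Proof.
  revert h h'; induction n as [|n IH]; intros h h' Hu H; simpl.
  - apply H; lia.
  - assert (H0 := IH h h' Hu ltac:(intros k Hk; apply H; lia)).
    assert (H1 := IH (fun k => h (S k)) (fun k => h' (S k)) Hu
                    ltac:(intros k Hk; apply H; lia)).
    nra.
Qed.

Lemma bernstein_at_0 n h : bernstein n h 0 = h O.
Proof. revert h; induction n as [|n IH]; intros h; simpl; [|rewrite !IH]; ring. Qed.

Lemma bernstein_at_1 n h : bernstein n h 1 = h n.
Proof. revert h; induction n as [|n IH]; intros h; simpl; [|rewrite !IH]; ring. Qed.

Lemma bernstein_id n u : bernstein n INR u = INR n * u.
Proof.
  induction n as [|n IH]; cbn [bernstein]; [simpl; ring|].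
  rewrite (bernstein_ext n (fun k => INR (S k)) (fun k => 1 * INR k + 1 * 1))
    by (intros; rewrite S_INR; ring).
  rewrite bernstein_lin, bernstein_const, IH, S_INR; ring.
Qed.

Lemma bernstein_sq n u :
  bernstein n (fun k => INR k ^ 2) u = INR n * u * (1 - u) + (INR n * u) ^ 2.
Proof.
  induction n as [|n IH]; cbn [bernstein]; [simpl; ring|].
  rewrite (bernstein_ext n (fun k => INR (S k) ^ 2) (fun k => 1 * INR k ^ 2 + 1 * (2 * INR k + 1)))
    by (intros; rewrite S_INR; ring).
  rewrite bernstein_lin.
  rewrite (bernstein_ext n (fun k => 2 * INR k + 1) (fun k => 2 * INR k + 1 * 1)) by (intros; ring).
  rewrite bernstein_lin, bernstein_const, IH, bernstein_id, S_INR. ring.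
Qed.

Lemma bernstein_variance n u :
  bernstein n (fun k => (INR k - INR n * u) ^ 2) u = INR n * u * (1 - u).
Proof.
  rewrite (bernstein_ext n _
    (fun k => 1 * INR k ^ 2 + 1 * ((-2 * INR n * u) * INR k + (INR n * u) ^ 2 * 1)))
    by (intros; ring).
  rewrite !bernstein_lin, bernstein_const, bernstein_sq, bernstein_id; ring.
Qed.

Lemma bernstein_quadratic n c A u :
  bernstein n (fun k => c + A * (INR k - INR n * u) ^ 2) u = c + A * (INR n * u * (1 - u)).
Proof.
  rewrite (bernstein_ext n _ (fun k => c * 1 + A * (INR k - INR n * u) ^ 2)) by (intros; ring).
  rewrite bernstein_lin, bernstein_const, bernstein_variance; ring.
Qed.

Lemma bernstein_deviation n h c e A u : 0 <= u <= 1 ->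
  (forall k, (k <= n)%nat -> Rabs (h k - c) <= e + A * (INR k - INR n * u) ^ 2) ->
  Rabs (bernstein n h u - c) <= e + A * (INR n * u * (1 - u)).
Proof.
  intros Hu H. apply Rabs_le; split.
  - enough (c - e + - A * (INR n * u * (1 - u)) <= bernstein n h u) by lra.
    rewrite <- bernstein_quadratic. apply bernstein_le; auto.
    intros k Hk. apply H, Rabs_le_between in Hk. lra.
  - enough (bernstein n h u <= c + e + A * (INR n * u * (1 - u))) by lra.
    rewrite <- bernstein_quadratic. apply bernstein_le; auto.
    intros k Hk. apply H, Rabs_le_between in Hk. lra.
Qed.

Lemma is_derive_bernstein n h u :
  is_derive (bernstein n h) u (INR n * bernstein (pred n) (fun k => h (S k) - h k) u).
Proof.
  revert h; induction n as [|m IH]; intros h.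
  - replace (INR 0 * _) with 0 by (simpl; ring). exact (is_derive_const (h O) u).
  - set (F := bernstein m h); set (G := bernstein m (fun k => h (S k))).
    assert (HF := IH h); assert (HG := IH (fun k => h (S k))); fold F G in HF, HG.
    assert (D := is_derive_plus _ _ u _ _
      (Derive.is_derive_mult (fun u => 1 - u) F u _ _
         (is_derive_minus _ _ u _ _ (is_derive_const 1 u) (is_derive_id u)) HF)
      (Derive.is_derive_mult (fun u => u) G u _ _ (is_derive_id u) HG)).
    match type of D with is_derive _ _ ?l => replace (INR (S m) * _) with l end; [exact D|].
    assert (Ediff : G u - F u = bernstein m (fun k => h (S k) - h k) u).
    { rewrite (bernstein_ext m _ (fun k => 1 * h (S k) + (-1) * h k)) by (intros; ring).
      rewrite bernstein_lin; unfold F, G; ring. }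
    rewrite S_INR; cbn [pred]. change (plus ?a ?b) with (a + b). change (minus ?a ?b) with (a - b).
    change zero with 0. change one with 1. cbv beta.
    destruct m as [|m]; cbn [pred bernstein] in *; [simpl INR|]; lra.
Qed.

(** * Lipschitz functions on an interval *)

Definition lipschitz_on (g : R -> R) (a b L : R) : Prop :=
  forall y z, a <= y <= b -> a <= z <= b -> Rabs (g y - g z) <= L * Rabs (y - z).

Lemma lipschitz_on_ordered h a b L :
  (forall y z, a <= y <= b -> a <= z <= b -> y <= z -> Rabs (h y - h z) <= L * (z - y)) ->
  lipschitz_on h a b L.
Proof.
  intros H y z Hy Hz. destruct (Rle_or_lt y z).
  - rewrite (Rabs_minus_sym y), (Rabs_pos_eq (z - y)) by lra; auto.
  - rewrite (Rabs_minus_sym (h y)), (Rabs_pos_eq (y - z)) by lra; apply H; auto; lra.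
Qed.

Lemma lipschitz_on_sub h a b a' b' L : a <= a' -> b' <= b ->
  lipschitz_on h a b L -> lipschitz_on h a' b' L.
Proof. intros Ha Hb H y z Hy Hz; apply H; lra. Qed.

Lemma lipschitz_on_le h a b L L' : L <= L' -> lipschitz_on h a b L -> lipschitz_on h a b L'.
Proof.
  intros HL H y z Hy Hz. eapply Rle_trans; [apply H; auto|].
  apply Rmult_le_compat_r; [apply Rabs_pos|auto].
Qed.

Lemma lipschitz_on_glue h a c d L : a <= c <= d ->
  lipschitz_on h a c L -> lipschitz_on h c d L -> lipschitz_on h a d L.
Proof.
  intros Hc H1 H2. apply lipschitz_on_ordered; intros y z Hy Hz Hyz.
  destruct (Rle_or_lt z c).
  { rewrite <- (Rabs_pos_eq (z - y)), (Rabs_minus_sym z) by lra; apply H1; lra. }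
  destruct (Rle_or_lt c y).
  { rewrite <- (Rabs_pos_eq (z - y)), (Rabs_minus_sym z) by lra; apply H2; lra. }
  replace (h y - h z) with ((h y - h c) + (h c - h z)) by ring.
  eapply Rle_trans; [apply Rabs_triang|].
  assert (A1 := H1 y c ltac:(lra) ltac:(lra)); assert (A2 := H2 c z ltac:(lra) ltac:(lra)).
  rewrite (Rabs_minus_sym y), (Rabs_pos_eq (c - y)) in A1 by lra.
  rewrite (Rabs_minus_sym c), (Rabs_pos_eq (z - c)) in A2 by lra. lra.
Qed.

Lemma lipschitz_on_reflect h a b L :
  lipschitz_on h a b L -> lipschitz_on (fun y => h (- y)) (- b) (- a) L.
Proof.
  intros H y z Hy Hz. replace (y - z) with (- (- y - - z)) by ring.
  rewrite Rabs_Ropp. apply H; lra.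
Qed.

Lemma lipschitz_on_slope h a b L y z : lipschitz_on h a b L ->
  a <= y <= b -> a <= z <= b -> y <> z -> Rabs ((h y - h z) / (y - z)) <= L.
Proof.
  intros H Hy Hz Hyz. assert (Hd : 0 < Rabs (y - z)) by (apply Rabs_pos_lt; lra).
  rewrite Rabs_div by lra. apply (Rmult_le_reg_r (Rabs (y - z))); [exact Hd|].
  unfold Rdiv; rewrite Rmult_assoc, Rinv_l, Rmult_1_r by lra. now apply H.
Qed.

Lemma lipschitz_on_uniform_continuity h a b L : 0 <= L -> lipschitz_on h a b L ->
  forall eps, 0 < eps -> exists eta, 0 < eta /\
  forall y z, a <= y <= b -> a <= z <= b -> Rabs (y - z) <= eta -> Rabs (h y - h z) < eps.
Proof.
  intros HL H eps Heps. exists (eps / (L + 1)); split; [apply Rdiv_lt_0_compat; lra|].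
  intros y z Hy Hz Hyz. eapply Rle_lt_trans; [apply H; auto|].
  apply Rle_lt_trans with (L * (eps / (L + 1))); [apply Rmult_le_compat_l; auto|].
  apply (Rmult_lt_reg_r (L + 1)); [lra|]. field_simplify; lra.
Qed.

Lemma is_lub_approx (E : R -> Prop) s y : is_lub E s -> y < s -> exists x, E x /\ y < x.
Proof.
  intros [Hub Hleast] Hy. apply NNPP; intros Hno.
  enough (s <= y) by lra. apply Hleast; intros x Ex.
  destruct (Rle_or_lt x y); auto. exfalso; eauto.
Qed.

Lemma locally_lipschitz_lipschitz_on f a b : locally_lipschitz f -> a <= b ->
  exists L, 0 <= L /\ lipschitz_on f a b L.
Proof.
  intros Hf Hab.
  set (E := fun x => a <= x <= b /\ exists L, 0 <= L /\ lipschitz_on f a x L).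
  assert (Ea : E a).
  { split; [lra|]. exists 0; split; [lra|]. intros y z Hy Hz.
    replace y with a by lra; replace z with a by lra. rewrite Rminus_diag, Rabs_R0; lra. }
  destruct (completeness E) as [s Hs]; [exists b; intros x Ex; apply Ex|exists a; auto|].
  assert (Has : a <= s) by (apply Hs; auto).
  assert (Hsb : s <= b) by (apply Hs; intros x Ex; apply Ex).
  destruct (Hf s) as [r [Hr [L1 HL1]]].
  assert (Hball : lipschitz_on f (s - r / 2) (s + r / 2) L1).
  { intros y z Hy Hz. apply HL1; apply Rabs_lt_between'; lra. }
  assert (Hgrow : forall x, a <= x <= b -> x < s + r / 2 -> E x).
  { intros x Hx Hxs. split; [auto|].
    destruct (is_lub_approx E s (s - r / 2) Hs ltac:(lra)) as [x0 [[Hx0 [L0 [HL0 H0]]] Hx0s]].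
    assert (x0 <= s) by (apply Hs; split; [auto|eauto]).
    exists (Rmax L0 (Rmax L1 0)).
    assert (L0 <= Rmax L0 (Rmax L1 0)) by apply Rmax_l.
    assert (L1 <= Rmax L0 (Rmax L1 0)) by (eapply Rle_trans; [apply Rmax_l|apply Rmax_r]).
    assert (0 <= Rmax L0 (Rmax L1 0)) by (eapply Rle_trans; [apply Rmax_r|apply Rmax_r]).
    split; [auto|]. destruct (Rle_or_lt x x0).
    - apply (lipschitz_on_sub f a x0); [lra|lra|]. apply (lipschitz_on_le f a x0 L0); auto.
    - apply (lipschitz_on_glue f a x0 x); [lra| |].
      + apply (lipschitz_on_le f a x0 L0); auto.
      + apply (lipschitz_on_sub f (s - r / 2) (s + r / 2)); [lra|lra|].
        apply (lipschitz_on_le f _ _ L1); auto. }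
  assert (Hsb' : s = b).
  { destruct (Rle_or_lt b s) as [|Hlt]; [lra|].
    assert (Hm : s < Rmin (s + r / 4) b) by (apply Rmin_glb_lt; lra).
    assert (Rmin (s + r / 4) b <= s); [|lra].
    apply Hs, Hgrow; [split; [lra|apply Rmin_r]|].
    eapply Rle_lt_trans; [apply Rmin_l|lra]. }
  destruct (Hgrow b ltac:(lra) ltac:(lra)) as [_ HL]. exact HL.
Qed.

Lemma first_crossing h a b L k : a < b -> 0 <= L -> lipschitz_on h a b L ->
  h a < k -> k < h b ->
  exists t, a < t < b /\ h t = k /\ forall y, a <= y < t -> h y < k.
Proof.
  intros Hab HL Hh Ha Hb.
  set (E := fun x => a <= x <= b /\ forall y, a <= y <= x -> h y < k).
  assert (Ea : E a) by (split; [lra|intros y Hy; replace y with a by lra; auto]).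
  destruct (completeness E) as [s Hs]; [exists b; intros x Ex; apply Ex|exists a; auto|].
  assert (Has : a <= s) by (apply Hs; auto).
  assert (Hsb : s <= b) by (apply Hs; intros x Ex; apply Ex).
  assert (Hbelow : forall y, a <= y < s -> h y < k).
  { intros y Hy. destruct (is_lub_approx E s y Hs ltac:(lra)) as [x [[_ Ex] Hyx]]. apply Ex; lra. }
  assert (Hcont := lipschitz_on_uniform_continuity h a b L HL Hh).
  destruct (Req_dec (h s) k) as [Hk|Hk].
  { exists s; repeat split; auto.
    - destruct (Req_dec s a) as [->|]; lra.
    - destruct (Req_dec s b) as [->|]; lra. }
  exfalso. destruct (Hcont (Rabs (h s - k)) ltac:(apply Rabs_pos_lt; lra)) as [eta [Heta Hnear]].
  destruct (Rlt_or_le (h s) k) as [Hlt|Hge].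
  - set (x := Rmin (s + eta) b).
    assert (Hx : s < x)
      by (unfold x; apply Rmin_glb_lt; [lra|destruct (Req_dec s b) as [->|]; lra]).
    assert (E x); [|assert (x <= s) by (apply Hs; auto); lra].
    split; [split; [lra|apply Rmin_r]|]. intros y Hy.
    destruct (Rlt_or_le y s); [apply Hbelow; lra|].
    assert (x <= s + eta) by apply Rmin_l. assert (x <= b) by apply Rmin_r.
    assert (A := Hnear y s ltac:(lra) ltac:(lra) ltac:(apply Rabs_le_between; lra)).
    rewrite (Rabs_left (h s - k)) in A by lra. apply Rabs_lt_between in A. lra.
  - assert (Has' : a < s) by (destruct (Req_dec s a) as [->|]; lra).
    set (y := Rmax a (s - eta)).
    assert (Hy : a <= y < s) by (split; [apply Rmax_l|apply Rmax_lub_lt; lra]).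
    assert (s - eta <= y) by apply Rmax_r.
    assert (A := Hnear y s ltac:(lra) ltac:(lra) ltac:(apply Rabs_le_between; lra)).
    assert (h y < k) by (apply Hbelow; lra).
    rewrite (Rabs_pos_eq (h s - k)) in A by lra. apply Rabs_lt_between in A. lra.
Qed.

Lemma level_crossings f a b L k : a < 0 < b -> 0 <= L -> lipschitz_on f a b L ->
  f 0 < k -> k < f a -> k < f b ->
  exists tm tp, a < tm < 0 /\ 0 < tp < b /\ f tm = k /\ f tp = k /\
    forall x, tm < x < tp -> f x < k.
Proof.
  intros Hab HL Hf H0 Ha Hb.
  assert (Hright : lipschitz_on f 0 b L) by (apply (lipschitz_on_sub f a b); auto; lra).
  assert (Hleft : lipschitz_on (fun y => f (- y)) 0 (- a) L).
  { apply (lipschitz_on_sub _ (- b) (- a)); [lra|lra|]. now apply lipschitz_on_reflect. }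
  destruct (first_crossing f 0 b L k) as [tp [Htp [Ftp Btp]]]; auto; [lra|].
  destruct (first_crossing (fun y => f (- y)) 0 (- a) L k) as [s [Hs [Fs Bs]]];
    rewrite ?Ropp_0, ?Ropp_involutive; auto; [lra|].
  exists (- s), tp; repeat split; auto; try lra.
  intros x Hx. destruct (Rle_or_lt 0 x).
  - apply Btp; lra.
  - replace x with (- - x) by ring. apply Bs; lra.
Qed.

(** * Bernstein approximation on an interval *)

Definition bernstein_on (a b : R) (n : nat) (h : nat -> R) (x : R) : R :=
  bernstein n h ((x - a) / (b - a)).

Lemma is_derive_bernstein_on a b n h x :
  is_derive (bernstein_on a b n h) x
    (bernstein_on a b (pred n) (fun k => INR n / (b - a) * (h (S k) - h k)) x).
Proof.
  assert (Hu : is_derive (fun t => (t - a) / (b - a)) x (/ (b - a)))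
    by (auto_derive; [easy|ring]).
  unfold bernstein_on; rewrite bernstein_scal.
  replace (INR n / (b - a) * _) with
    (/ (b - a) * (INR n * bernstein (pred n) (fun k => h (S k) - h k) ((x - a) / (b - a))))
    by (unfold Rdiv; ring).
  exact (is_derive_comp (bernstein n h) _ x _ _ (is_derive_bernstein n h _) Hu).
Qed.

Lemma Derive_n_bernstein_on a b k : forall n h, exists m h',
  forall x, Derive_n (bernstein_on a b n h) k x = bernstein_on a b m h' x.
Proof.
  induction k as [|k IH]; intros n h; [exists n, h; reflexivity|].
  destruct (IH n h) as [m [h' E]].
  exists (pred m), (fun j => INR m / (b - a) * (h' (S j) - h' j)); intros x.
  cbn [Derive_n]. rewrite (Derive_ext _ _ x E).
  apply is_derive_unique, is_derive_bernstein_on.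
Qed.

Lemma smooth_bernstein_on a b n h : smooth (bernstein_on a b n h).
Proof.
  intros k x. destruct (Derive_n_bernstein_on a b k n h) as [m [h' E]].
  apply (ex_derive_ext (bernstein_on a b m h')); [intros; symmetry; apply E|].
  eexists; apply is_derive_bernstein_on.
Qed.

Definition node (a b : R) (n k : nat) : R := a + (b - a) * (INR k / INR n).

Definition bernstein_approx (g : R -> R) (a b : R) (n : nat) : R -> R :=
  bernstein_on a b n (fun k => g (node a b n k)).

Definition node_slope (g : R -> R) (a b : R) (n k : nat) : R :=
  (g (node a b n (S k)) - g (node a b n k)) / (node a b n (S k) - node a b n k).

Section Nodes.

Variables (a b : R) (n : nat).
Hypotheses (Hab : a < b) (Hn : (0 < n)%nat).

Let Hn_pos := lt_0_INR n Hn.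

Lemma node_in k : (k <= n)%nat -> a <= node a b n k <= b.
Proof.
  intros Hk. pose proof Hn_pos. assert (Hk' : INR k <= INR n) by (apply le_INR; lia).
  assert (0 <= INR k) by apply pos_INR.
  assert (Hq : 0 <= INR k / INR n <= 1).
  { split; [apply Rdiv_le_0_compat; lra|].
    apply (Rmult_le_reg_r (INR n)); [lra|]. field_simplify; lra. }
  unfold node; split.
  - assert (0 <= (b - a) * (INR k / INR n)) by (apply Rmult_le_pos; lra). lra.
  - assert ((b - a) * (INR k / INR n) <= (b - a) * 1) by (apply Rmult_le_compat_l; lra). lra.
Qed.

Lemma node_spacing k : node a b n (S k) - node a b n k = (b - a) / INR n.
Proof. pose proof Hn_pos; unfold node; rewrite S_INR; field; lra. Qed.

Lemma node_sub k x :
  node a b n k - x = (b - a) / INR n * (INR k - INR n * ((x - a) / (b - a))).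
Proof. pose proof Hn_pos; unfold node; field; lra. Qed.

Lemma bernstein_approx_at_a g : bernstein_approx g a b n a = g a.
Proof.
  unfold bernstein_approx, bernstein_on. replace ((a - a) / (b - a)) with 0 by (field; lra).
  rewrite bernstein_at_0; unfold node; f_equal; simpl; unfold Rdiv; ring.
Qed.

Lemma bernstein_approx_at_b g : bernstein_approx g a b n b = g b.
Proof.
  unfold bernstein_approx, bernstein_on. replace ((b - a) / (b - a)) with 1 by (field; lra).
  pose proof Hn_pos; rewrite bernstein_at_1; unfold node; f_equal; field; lra.
Qed.

End Nodes.

Lemma Rabs_le_AM_GM y e : 0 < e -> Rabs y <= e + y ^ 2 / (4 * e).
Proof.
  intros He. rewrite <- pow2_abs.
  assert (H := pow2_ge_0 (Rabs y - 2 * e)).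
  apply (Rmult_le_reg_r (4 * e)); [lra|]. field_simplify; lra.
Qed.

Lemma mul_one_sub_le_quarter u : u * (1 - u) <= / 4.
Proof. assert (H := pow2_ge_0 (u - / 2)). nra. Qed.

Section BernsteinApprox.

Variables (a b : R).
Hypothesis Hab : a < b.

Lemma node_slope_scaled g n k : (0 < n)%nat ->
  node_slope g a b n k = INR n / (b - a) * (g (node a b n (S k)) - g (node a b n k)).
Proof.
  intros Hn. assert (0 < INR n) by (apply lt_0_INR; lia).
  unfold node_slope; rewrite node_spacing by auto; field; lra.
Qed.

Lemma node_slope_bound g s n k : (k < n)%nat -> lipschitz_on g a b s ->
  Rabs (node_slope g a b n k) <= s.
Proof.
  intros Hk Hg. assert (0 < INR n) by (apply lt_0_INR; lia).
  apply (lipschitz_on_slope g a b); auto; try (apply node_in; auto; lia).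
  assert (0 < (b - a) / INR n) by (apply Rdiv_lt_0_compat; lra).
  assert (E := node_spacing a b n ltac:(lia) k). lra.
Qed.

Lemma Derive_bernstein_approx g m x :
  Derive (bernstein_approx g a b (S m)) x = bernstein_on a b m (node_slope g a b (S m)) x.
Proof.
  apply is_derive_unique.
  replace (bernstein_on a b m (node_slope g a b (S m)) x) with
    (bernstein_on a b (pred (S m))
       (fun k => INR (S m) / (b - a) * (g (node a b (S m) (S k)) - g (node a b (S m) k))) x).
  - apply is_derive_bernstein_on.
  - apply bernstein_ext; intros k _; symmetry; apply node_slope_scaled; lia.
Qed.
Lemma unit_coord_in x : a <= x <= b -> 0 <= (x - a) / (b - a) <= 1.
Proof.
  intros Hx; split; [apply Rdiv_le_0_compat; lra|].
  apply (Rmult_le_reg_r (b - a)); [lra|]. field_simplify; lra.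
Qed.

Lemma bernstein_approx_close g s eps n x : (0 < n)%nat -> lipschitz_on g a b s -> 0 < eps ->
  (s * (b - a) / eps) ^ 2 <= INR n -> a <= x <= b ->
  Rabs (bernstein_approx g a b n x - g x) <= eps.
Proof.
  intros Hn Hg He HN Hx. assert (Hn' : 0 < INR n) by (apply lt_0_INR; lia).
  set (u := (x - a) / (b - a)). assert (Hu : 0 <= u <= 1) by (apply unit_coord_in; auto).
  set (C := s * (b - a) / INR n).
  assert (Hk : forall k, (k <= n)%nat ->
    Rabs (g (node a b n k) - g x) <= eps / 2 + C ^ 2 / (2 * eps) * (INR k - INR n * u) ^ 2).
  { intros k Hk. eapply Rle_trans; [apply Hg; [apply node_in|]; auto|].
    assert (Hs : s * Rabs (node a b n k - x) <= Rabs (C * (INR k - INR n * u))).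
    { rewrite node_sub by auto. replace (C * _) with (s * ((b - a) / INR n * (INR k - INR n * u)))
        by (unfold C; field; lra).
      rewrite (Rabs_mult s). apply Rmult_le_compat_r; [apply Rabs_pos|apply Rle_abs]. }
    eapply Rle_trans; [exact Hs|]. eapply Rle_trans; [apply (Rabs_le_AM_GM _ (eps / 2)); lra|].
    right; field; lra. }
  eapply Rle_trans; [apply (bernstein_deviation _ _ _ _ _ _ Hu Hk)|].
  assert (HC : C ^ 2 * INR n <= eps ^ 2).
  { replace (C ^ 2 * INR n) with ((s * (b - a) / eps) ^ 2 * (eps ^ 2 / INR n))
      by (unfold C; field; lra).
    replace (eps ^ 2) with (INR n * (eps ^ 2 / INR n)) at 2 by (field; lra).
    apply Rmult_le_compat_r; [apply Rdiv_le_0_compat; nra|exact HN]. }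
  assert (Hq := mul_one_sub_le_quarter u).
  assert (0 <= u * (1 - u)) by nra.
  replace (C ^ 2 / (2 * eps) * (INR n * u * (1 - u)))
    with (C ^ 2 * INR n * (u * (1 - u)) / (2 * eps))
    by (field; lra).
  assert (C ^ 2 * INR n * (u * (1 - u)) <= eps ^ 2 / 4).
  { assert (0 <= C ^ 2 * INR n) by (apply Rmult_le_pos; [apply pow2_ge_0|lra]). nra. }
  enough (C ^ 2 * INR n * (u * (1 - u)) / (2 * eps) <= eps / 8) by lra.
  apply (Rmult_le_reg_r (2 * eps)); [lra|]. field_simplify; lra.
Qed.

Lemma Derive_bernstein_approx_bound g s m x : lipschitz_on g a b s -> a <= x <= b ->
  Rabs (Derive (bernstein_approx g a b (S m)) x) <= s.
Proof.
  intros Hg Hx. rewrite Derive_bernstein_approx.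
  replace s with (s + 0 * (INR m * ((x - a) / (b - a)) * (1 - (x - a) / (b - a)))) by ring.
  rewrite <- (Rminus_0_r (bernstein_on _ _ _ _ _)).
  apply bernstein_deviation; [apply unit_coord_in; auto|].
  intros k Hk. rewrite Rminus_0_r, Rmult_0_l, Rplus_0_r. apply (node_slope_bound g s); auto; lia.
Qed.

Lemma nodes_near m w x k : 0 < w -> (b - a) / INR (S m) <= w -> a <= x <= b ->
  Rabs (INR k - INR m * ((x - a) / (b - a))) <= INR m * (w / (b - a)) ->
  Rabs (node a b (S m) k - x) <= 2 * w /\ Rabs (node a b (S m) (S k) - x) <= 2 * w.
Proof.
  intros Hw Hspace Hx Hk. assert (HS := lt_0_INR (S m) ltac:(lia)).
  assert (Hu := unit_coord_in x Hx). set (u := (x - a) / (b - a)) in *.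
  assert (Hnode : forall j, Rabs (INR j - INR (S m) * u) <= INR m * (w / (b - a)) + 1 ->
    Rabs (node a b (S m) j - x) <= 2 * w).
  { intros j Hj. rewrite (node_sub a b (S m) Hab ltac:(lia)), Rabs_mult.
    rewrite (Rabs_pos_eq ((b - a) / INR (S m))) by (apply Rdiv_le_0_compat; lra).
    eapply Rle_trans; [apply Rmult_le_compat_l; [apply Rdiv_le_0_compat; lra|exact Hj]|].
    rewrite S_INR in *.
    assert (Hm : INR m / (INR m + 1) <= 1)
      by (apply (Rmult_le_reg_r (INR m + 1)); [lra|]; field_simplify; lra).
    replace ((b - a) / (INR m + 1) * (INR m * (w / (b - a)) + 1))
      with (w * (INR m / (INR m + 1)) + (b - a) / (INR m + 1)) by (field; lra).
    nra. }
  split; apply Hnode; rewrite !S_INR.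
  - replace (INR k - (INR m + 1) * u) with ((INR k - INR m * u) + - u) by ring.
    eapply Rle_trans; [apply Rabs_triang|]. rewrite Rabs_Ropp, (Rabs_pos_eq u); lra.
  - replace (INR k + 1 - (INR m + 1) * u) with ((INR k - INR m * u) + (1 - u)) by ring.
    eapply Rle_trans; [apply Rabs_triang|]. rewrite (Rabs_pos_eq (1 - u)); lra.
Qed.

Lemma node_slope_affine g s0 n k : (0 < n)%nat ->
  g (node a b n (S k)) - g (node a b n k) = s0 * (node a b n (S k) - node a b n k) ->
  node_slope g a b n k = s0.
Proof.
  intros Hn E. assert (0 < INR n) by (apply lt_0_INR; lia).
  unfold node_slope. rewrite E, node_spacing by auto. field; split; lra.
Qed.

(* Inside the window the node slopes equal [s0]; outside it they deviate by at
   most [2 s], which the weight [(k - m u)^2] dominates, and the variance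
   identity sums the weights to [m u (1 - u)]. *)
Lemma Derive_bernstein_approx_near_affine g s s0 w m x :
  lipschitz_on g a b s -> Rabs s0 <= s -> 0 < w ->
  (b - a) / INR (S m) <= w -> 1 <= INR m * (w / (b - a)) ^ 2 -> a <= x <= b ->
  (forall y z, a <= y <= b -> a <= z <= b -> Rabs (y - x) <= 2 * w -> Rabs (z - x) <= 2 * w ->
     g z - g y = s0 * (z - y)) ->
  Rabs (Derive (bernstein_approx g a b (S m)) x - s0) <= s / 2.
Proof.
  intros Hg Hs0 Hw Hspace Hm Hx Haff.
  rewrite Derive_bernstein_approx.
  set (u := (x - a) / (b - a)). assert (Hu : 0 <= u <= 1) by (apply unit_coord_in; auto).
  set (r := w / (b - a)) in Hm. assert (Hr : 0 < r) by (apply Rdiv_lt_0_compat; lra).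
  assert (HMr : 0 < (INR m * r) ^ 2) by (apply pow_lt; assert (0 <= INR m) by apply pos_INR; nra).
  set (A := 2 * s / (INR m * r) ^ 2).
  assert (Hs : 0 <= s) by (eapply Rle_trans; [apply Rabs_pos|exact Hs0]).
  assert (Hk : forall k, (k <= m)%nat ->
    Rabs (node_slope g a b (S m) k - s0) <= 0 + A * (INR k - INR m * u) ^ 2).
  { intros k Hk. assert (0 <= A * (INR k - INR m * u) ^ 2)
      by (apply Rmult_le_pos; [apply Rdiv_le_0_compat; lra|apply pow2_ge_0]).
    destruct (Rle_or_lt (Rabs (INR k - INR m * u)) (INR m * r)) as [Hc|Hc].
    - destruct (nodes_near m w x k Hw Hspace Hx Hc) as [Hk0 Hk1].
      rewrite (node_slope_affine g s0 (S m) k), Rminus_diag, Rabs_R0 by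
        (lia || (apply Haff; auto; apply node_in; auto; lia)).
      lra.
    - assert (Hsq : (INR m * r) ^ 2 <= (INR k - INR m * u) ^ 2).
      { rewrite <- (pow2_abs (INR k - INR m * u)).
        apply pow_incr; split; [apply Rmult_le_pos; [apply pos_INR|lra]|lra]. }
      assert (2 * s <= A * (INR k - INR m * u) ^ 2).
      { unfold A. apply (Rmult_le_reg_r ((INR m * r) ^ 2)); auto. field_simplify; nra. }
      assert (Hslope := node_slope_bound g s (S m) k ltac:(lia) Hg).
      eapply Rle_trans; [apply Rabs_triang|]. rewrite Rabs_Ropp. lra. }
  eapply Rle_trans; [apply (bernstein_deviation _ _ _ _ _ _ Hu Hk)|].
  assert (Hq := mul_one_sub_le_quarter u).
  replace (0 + A * (INR m * u * (1 - u))) with (s / 2 * (4 * (u * (1 - u))) / (INR m * r ^ 2))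
    by (unfold A; field; split; nra).
  assert (Hq0 : 0 <= s / 2 * (4 * (u * (1 - u)))) by (apply Rmult_le_pos; nra).
  apply (Rmult_le_reg_r (INR m * r ^ 2)); [lra|].
  unfold Rdiv at 1; rewrite Rmult_assoc, Rinv_l, Rmult_1_r by lra. nra.
Qed.

End BernsteinApprox.

(** * Monotonicity and level crossings of differentiable functions *)

Lemma MVT_Derive h x1 x2 : (forall x, ex_derive h x) -> x1 < x2 ->
  exists c, x1 <= c <= x2 /\ h x2 - h x1 = Derive h c * (x2 - x1).
Proof.
  intros Hd H12. destruct (MVT_gen h x1 x2 (Derive h)) as [c [Hc E]].
  - intros x _. apply Derive_correct, Hd.
  - intros x _. apply continuity_pt_filterlim, (ex_derive_continuous h), Hd.
  - rewrite Rmin_left, Rmax_right in Hc by lra. eauto.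
Qed.

Lemma IVT_Derive h x1 x2 k : (forall x, ex_derive h x) -> x1 < x2 ->
  Rmin (h x1) (h x2) < k < Rmax (h x1) (h x2) -> exists t, x1 < t < x2 /\ h t = k.
Proof.
  intros Hd H12 Hk.
  destruct (IVT_gen h x1 x2 k) as [t [Ht Et]].
  - intros x. apply continuity_pt_filterlim, (ex_derive_continuous h), Hd.
  - lra.
  - rewrite Rmin_left, Rmax_right in Ht by lra.
    exists t; split; auto. split; destruct Ht as [Ht1 Ht2].
    + destruct (Req_dec t x1) as [->|]; [|lra]. unfold Rmin, Rmax in Hk; destruct Rle_dec; lra.
    + destruct (Req_dec t x2) as [->|]; [|lra]. unfold Rmin, Rmax in Hk; destruct Rle_dec; lra.
Qed.

Definition transversal_well (h : R -> R) (p q c : R) : Prop :=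
  h p = c /\ h q = c /\ Derive h p <> 0 /\ Derive h q <> 0 /\ forall z, p < z < q -> h z < c.

Lemma transversal_well_intro h p p' q' q c : (forall x, ex_derive h x) ->
  p <= p' <= q' -> q' <= q -> h p = c -> h q = c ->
  (forall x, p <= x <= p' -> Derive h x < 0) -> (forall x, q' <= x <= q -> 0 < Derive h x) ->
  (forall x, p' <= x <= q' -> h x < c) ->
  transversal_well h p q c.
Proof.
  intros Hd Hp Hq Hhp Hhq Hdec Hinc Hmid.
  assert (Derive h p < 0) by (apply Hdec; lra).
  assert (0 < Derive h q) by (apply Hinc; lra).
  repeat split; auto; try lra. intros z Hz.
  destruct (Rle_or_lt z p') as [Hzp|Hzp]; [|destruct (Rle_or_lt q' z) as [Hzq|Hzq]].
  - destruct (MVT_Derive h p z Hd ltac:(lra)) as [x [Hx E]].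
    assert (Derive h x < 0) by (apply Hdec; lra). nra.
  - destruct (MVT_Derive h z q Hd ltac:(lra)) as [x [Hx E]].
    assert (0 < Derive h x) by (apply Hinc; lra). nra.
  - apply Hmid; lra.
Qed.

(** * Smoothing a profile that is affine near four points *)

Lemma bernstein_degree_exists A w l : 0 < w -> 0 < l ->
  exists m, A <= INR (S m) /\ l / INR (S m) <= w /\ 1 <= INR m * (w / l) ^ 2.
Proof.
  intros Hw Hl.
  assert (Hlw : 0 < l / w) by (apply Rdiv_lt_0_compat; lra).
  destruct (INR_unbounded (Rabs A + l / w + (l / w) ^ 2)) as [m Hm].
  assert (HA := Rle_abs A). assert (HA0 := Rabs_pos A).
  assert (Hsq : 0 <= (l / w) ^ 2) by apply pow2_ge_0. assert (0 <= INR m) by apply pos_INR.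
  exists m; rewrite S_INR; repeat split.
  - lra.
  - apply (Rmult_le_reg_r (INR m + 1)); [lra|].
    replace (l / (INR m + 1) * (INR m + 1)) with (w * (l / w)) by (field; split; lra).
    apply Rmult_le_compat_l; lra.
  - assert (E : (l / w) ^ 2 * (w / l) ^ 2 = 1) by (field; split; lra).
    rewrite <- E. apply Rmult_le_compat_r; [apply pow2_ge_0|lra].
Qed.

Section Profile.

Variables (g : R -> R) (a tm tp b c0 kappa sg rho : R).
Hypotheses (Hsg : 0 < sg) (Hrho : 0 < rho)
  (Ha_tm : 2 * rho <= tm - a) (Htm_tp : 2 * rho <= tp - tm) (Htp_b : 2 * rho <= b - tp)
  (Hlip : lipschitz_on g a b sg)
  (Hnear_a : forall x, a <= x <= a + rho -> g x = c0 - sg * (x - a))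
  (Hnear_tm : forall x, tm - rho <= x <= tm + rho -> g x = kappa - sg * (x - tm))
  (Hnear_tp : forall x, tp - rho <= x <= tp + rho -> g x = kappa + sg * (x - tp))
  (Hnear_b : forall x, b - rho <= x <= b -> g x = c0 + sg * (x - b))
  (Hbelow_c0 : forall x, a + rho / 2 <= x <= b - rho / 2 -> g x <= c0 - sg * rho / 2)
  (Hbelow_kappa : forall x, tm + rho / 2 <= x <= tp - rho / 2 -> g x <= kappa - sg * rho / 2).

Section Degree.

Variable m : nat.
Hypotheses (Hm_close : (sg * (b - a) / (sg * rho / 4)) ^ 2 <= INR (S m))
  (Hm_mesh : (b - a) / INR (S m) <= rho / 4) (Hm_local : 1 <= INR m * (rho / 4 / (b - a)) ^ 2).

Local Notation ft := (bernstein_approx g a b (S m)).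

Lemma profile_ex_derive x : ex_derive ft x.
Proof. eexists; apply is_derive_bernstein_on. Qed.

Lemma profile_close x : a <= x <= b -> Rabs (ft x - g x) <= sg * rho / 4.
Proof.
  intros Hx. apply (bernstein_approx_close a b ltac:(lra) g sg); auto; [lia|].
  apply Rdiv_lt_0_compat; [apply Rmult_lt_0_compat|]; lra.
Qed.

Lemma profile_Derive_affine x s0 p c lo hi : Rabs s0 <= sg -> a <= x <= b ->
  (forall y, lo <= y <= hi -> g y = c + s0 * (y - p)) ->
  (forall y, a <= y <= b -> Rabs (y - x) <= rho / 2 -> lo <= y <= hi) ->
  Rabs (Derive ft x - s0) <= sg / 2.
Proof.
  intros Hs0 Hx Haff Hwin.
  apply (Derive_bernstein_approx_near_affine a b ltac:(lra) g sg s0 (rho / 4)); auto; [lra|].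
  intros y z Hy Hz Hyx Hzx.
  rewrite (Haff y), (Haff z) by (apply Hwin; auto; lra). ring.
Qed.

Lemma profile_Derive_down x : a <= x <= a + rho / 2 \/ tm - rho / 2 <= x <= tm + rho / 2 ->
  Derive ft x <= - (sg / 2).
Proof.
  intros Hx. enough (Rabs (Derive ft x - - sg) <= sg / 2) as H
    by (apply Rabs_le_between in H; lra).
  assert (Hs : Rabs (- sg) <= sg) by (rewrite Rabs_Ropp, Rabs_pos_eq; lra).
  destruct Hx as [Hx|Hx].
  - apply (profile_Derive_affine x (- sg) a c0 a (a + rho)); [exact Hs|lra| |].
    + intros y Hy. rewrite Hnear_a by lra. ring.
    + intros y Hy Hyx. apply Rabs_le_between in Hyx. lra.
  - apply (profile_Derive_affine x (- sg) tm kappa (tm - rho) (tm + rho)); [exact Hs|lra| |].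
    + intros y Hy. rewrite Hnear_tm by lra. ring.
    + intros y Hy Hyx. apply Rabs_le_between in Hyx. lra.
Qed.

Lemma profile_Derive_up x : tp - rho / 2 <= x <= tp + rho / 2 \/ b - rho / 2 <= x <= b ->
  sg / 2 <= Derive ft x.
Proof.
  intros Hx. enough (Rabs (Derive ft x - sg) <= sg / 2) as H
    by (apply Rabs_le_between in H; lra).
  assert (Hs : Rabs sg <= sg) by (rewrite Rabs_pos_eq; lra).
  destruct Hx as [Hx|Hx].
  - apply (profile_Derive_affine x sg tp kappa (tp - rho) (tp + rho)); [exact Hs|lra| |].
    + intros y Hy. rewrite Hnear_tp by lra. ring.
    + intros y Hy Hyx. apply Rabs_le_between in Hyx. lra.
  - apply (profile_Derive_affine x sg b c0 (b - rho) b); [exact Hs|lra| |].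
    + intros y Hy. rewrite Hnear_b by lra. ring.
    + intros y Hy Hyx. apply Rabs_le_between in Hyx. lra.
Qed.

Lemma profile_level_crossings : exists psim psip,
  tm - rho / 2 < psim < tm + rho / 2 /\ tp - rho / 2 < psip < tp + rho / 2 /\
  ft psim = kappa /\ ft psip = kappa.
Proof.
  assert (Hclose : forall x, a <= x <= b -> ft x - sg * rho / 4 <= g x <= ft x + sg * rho / 4).
  { intros x Hx. assert (H := profile_close x Hx). apply Rabs_le_between in H. lra. }
  assert (Hsr : 0 < sg * rho) by (apply Rmult_lt_0_compat; lra).
  destruct (IVT_Derive ft (tm - rho / 2) (tm + rho / 2) kappa profile_ex_derive ltac:(lra))
    as [psim [Hpsim Fpsim]].
  { assert (H1 := Hclose (tm - rho / 2) ltac:(lra)).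
    assert (H2 := Hclose (tm + rho / 2) ltac:(lra)).
    rewrite Hnear_tm in H1 by lra. assert (H3 := Hbelow_kappa (tm + rho / 2) ltac:(lra)).
    unfold Rmin, Rmax; destruct Rle_dec; lra. }
  destruct (IVT_Derive ft (tp - rho / 2) (tp + rho / 2) kappa profile_ex_derive ltac:(lra))
    as [psip [Hpsip Fpsip]].
  { assert (H1 := Hclose (tp - rho / 2) ltac:(lra)).
    assert (H2 := Hclose (tp + rho / 2) ltac:(lra)).
    rewrite Hnear_tp in H2 by lra. assert (H3 := Hbelow_kappa (tp - rho / 2) ltac:(lra)).
    unfold Rmin, Rmax; destruct Rle_dec; lra. }
  exists psim, psip; repeat split; auto; lra.
Qed.

Lemma profile_of_degree : exists psim psip,
  tm - rho / 2 < psim < tm + rho / 2 /\ tp - rho / 2 < psip < tp + rho / 2 /\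
  transversal_well ft a b c0 /\ transversal_well ft psim psip kappa.
Proof.
  assert (Hbelow : forall x c, a <= x <= b -> g x <= c - sg * rho / 2 -> ft x < c).
  { intros x c Hx Hg. assert (H := profile_close x Hx). apply Rabs_le_between in H.
    assert (0 < sg * rho) by (apply Rmult_lt_0_compat; lra). lra. }
  destruct profile_level_crossings as (psim & psip & Hpsim & Hpsip & Fpsim & Fpsip).
  exists psim, psip; split; [lra|split; [lra|split]].
  - apply (transversal_well_intro ft a (a + rho / 2) (b - rho / 2) b c0 profile_ex_derive);
      try lra.
    + rewrite bernstein_approx_at_a, Hnear_a by (lra || lia). lra.
    + rewrite bernstein_approx_at_b, Hnear_b by (lra || lia). lra.
    + intros x Hx. assert (H := profile_Derive_down x ltac:(lra)). lra.
    + intros x Hx. assert (H := profile_Derive_up x ltac:(lra)). lra.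
    + intros x Hx. apply Hbelow; [lra|]. now apply Hbelow_c0.
  - apply (transversal_well_intro ft psim (tm + rho / 2) (tp - rho / 2) psip kappa
             profile_ex_derive); try lra.
    + intros x Hx. assert (H := profile_Derive_down x ltac:(lra)). lra.
    + intros x Hx. assert (H := profile_Derive_up x ltac:(lra)). lra.
    + intros x Hx. apply Hbelow; [lra|]. now apply Hbelow_kappa.
Qed.

End Degree.

Lemma profile_smoothing : exists ft psim psip, smooth ft /\
  tm - rho / 2 < psim < tm + rho / 2 /\ tp - rho / 2 < psip < tp + rho / 2 /\
  transversal_well ft a b c0 /\ transversal_well ft psim psip kappa /\
  forall z, a <= z <= b -> Rabs (ft z - g z) <= sg * rho / 4 /\ Rabs (Derive ft z) <= sg.
Proof.
  destruct (bernstein_degree_exists ((sg * (b - a) / (sg * rho / 4)) ^ 2) (rho / 4) (b - a))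
    as [m [Hm1 [Hm2 Hm3]]]; [lra|lra|].
  destruct (profile_of_degree m Hm1 Hm2 Hm3) as [psim [psip [Hpsim [Hpsip [Hwell1 Hwell2]]]]].
  exists (bernstein_approx g a b (S m)), psim, psip.
  refine (conj _ (conj Hpsim (conj Hpsip (conj Hwell1 (conj Hwell2 _))))).
  - apply smooth_bernstein_on.
  - intros z Hz; split.
    + apply (profile_close m); auto.
    + apply (Derive_bernstein_approx_bound a b ltac:(lra)); auto.
Qed.

End Profile.

(** * Sculpting f into such a profile *)

Lemma Rmax_dist_le x1 y1 x2 y2 K : Rabs (x1 - x2) <= K -> Rabs (y1 - y2) <= K ->
  Rabs (Rmax x1 y1 - Rmax x2 y2) <= K.
Proof.
  intros H1 H2. apply Rabs_le_between in H1; apply Rabs_le_between in H2.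
  apply Rabs_le; unfold Rmax; repeat destruct Rle_dec; lra.
Qed.

Lemma Rmin_dist_le x1 y1 x2 y2 K : Rabs (x1 - x2) <= K -> Rabs (y1 - y2) <= K ->
  Rabs (Rmin x1 y1 - Rmin x2 y2) <= K.
Proof.
  intros H1 H2. apply Rabs_le_between in H1; apply Rabs_le_between in H2.
  apply Rabs_le; unfold Rmin; repeat destruct Rle_dec; lra.
Qed.

Definition tent (sg rho c v : R) : R := Rmin (c + sg * v) (c + 2 * sg * rho - sg * v).

Section Tent.

Variables (sg rho c : R).
Hypothesis Hsg : 0 <= sg.

Lemma tent_le v M : c + sg * v <= M \/ c + sg * rho <= M -> tent sg rho c v <= M.
Proof.
  intros [H|H]; unfold tent, Rmin; destruct Rle_dec; lra.
Qed.

Lemma tent_rise v : v <= rho -> tent sg rho c v = c + sg * v.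
Proof. intros Hv. unfold tent. apply Rmin_left. nra. Qed.

Lemma tent_dist_le v1 v2 : Rabs (tent sg rho c v1 - tent sg rho c v2) <= sg * Rabs (v1 - v2).
Proof.
  apply Rmin_dist_le.
  - replace (c + sg * v1 - (c + sg * v2)) with (sg * (v1 - v2)) by ring.
    rewrite Rabs_mult, Rabs_pos_eq; lra.
  - replace (c + 2 * sg * rho - sg * v1 - (c + 2 * sg * rho - sg * v2)) with (sg * (v2 - v1))
      by ring.
    rewrite Rabs_mult, Rabs_pos_eq, Rabs_minus_sym; lra.
Qed.

Lemma tent_le_lipschitz_bound L tau v y : 0 <= rho -> 0 <= L <= sg -> (sg + L) * rho <= tau ->
  c - L * Rabs v <= y -> tent sg rho c v <= y + tau.
Proof.
  intros Hrho HL Htau Hy.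
  assert (Hrise : tent sg rho c v <= c + sg * v) by apply Rmin_l.
  assert (Hfall : tent sg rho c v <= c + 2 * sg * rho - sg * v) by apply Rmin_r.
  assert (0 <= (sg + L) * rho) by (apply Rmult_le_pos; lra).
  destruct (Rle_or_lt v 0); [|destruct (Rle_or_lt v rho)].
  - rewrite Rabs_left1 in Hy by lra.
    assert (0 <= (sg - L) * - v) by (apply Rmult_le_pos; lra). lra.
  - rewrite Rabs_pos_eq in Hy by lra.
    assert ((sg + L) * v <= (sg + L) * rho) by (apply Rmult_le_compat_l; lra). lra.
  - rewrite Rabs_pos_eq in Hy by lra.
    assert ((sg - L) * rho <= (sg - L) * v) by (apply Rmult_le_compat_l; lra). lra.
Qed.

End Tent.

(* [f - tau] with a tent of slope [sg] raised at each of the four level points: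
   near [a], [tm], [tp], [b] the maximum is attained by the tent, so it is
   affine there with slope [-sg], [-sg], [sg], [sg]. *)
Definition sculpt (f : R -> R) (a tm tp b c0 kappa sg rho tau x : R) : R :=
  Rmax (f x - tau)
    (Rmax (Rmax (tent sg rho c0 (a - x)) (tent sg rho kappa (tm - x)))
          (Rmax (tent sg rho kappa (x - tp)) (tent sg rho c0 (x - b)))).

Section Sculpture.

Variables (f : R -> R) (a tm tp b c0 kappa L sg rho tau d : R).
Hypotheses (Hlip : lipschitz_on f a b L) (HL : 0 <= L) (HLsg : L < sg)
  (Hrho : 0 < rho) (Htau : (sg + L) * rho <= tau)
  (Ha_tm : d <= tm - a) (Htm_tp : d <= tp - tm) (Htp_b : d <= b - tp) (Hrho_d : 2 * rho <= d)
  (Hpeak : 4 * (sg * rho) <= c0 - kappa) (Hdepth : 2 * (c0 - kappa) <= sg * d)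
  (Hfa : f a = c0) (Hfb : f b = c0) (Hftm : f tm = kappa) (Hftp : f tp = kappa)
  (Hf_c0 : forall x, a < x < b -> f x < c0) (Hf_kappa : forall x, tm < x < tp -> f x < kappa).

Local Notation g := (sculpt f a tm tp b c0 kappa sg rho tau).

Let sg_rho_nonneg : 0 <= sg * rho.
Proof. apply Rmult_le_pos; lra. Qed.

Let sg_mul_le u v : u <= v -> sg * u <= sg * v.
Proof. intros; apply Rmult_le_compat_l; lra. Qed.

Lemma sculpt_le x M : f x - tau <= M ->
  tent sg rho c0 (a - x) <= M -> tent sg rho kappa (tm - x) <= M ->
  tent sg rho kappa (x - tp) <= M -> tent sg rho c0 (x - b) <= M -> g x <= M.
Proof. intros; unfold sculpt; repeat apply Rmax_lub; auto. Qed.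

Lemma sculpt_ge x : f x - tau <= g x /\
  tent sg rho c0 (a - x) <= g x /\ tent sg rho kappa (tm - x) <= g x /\
  tent sg rho kappa (x - tp) <= g x /\ tent sg rho c0 (x - b) <= g x.
Proof. unfold sculpt, Rmax; repeat destruct Rle_dec; repeat split; lra. Qed.

Lemma sculpt_lipschitz : lipschitz_on g a b sg.
Proof.
  intros y z Hy Hz. unfold sculpt.
  assert (Hsg : 0 <= sg) by lra.
  assert (Hleft : forall c p,
    Rabs (tent sg rho c (p - y) - tent sg rho c (p - z)) <= sg * Rabs (y - z)).
  { intros c p. replace (y - z) with (- ((p - y) - (p - z))) by ring.
    rewrite Rabs_Ropp. apply tent_dist_le; lra. }
  assert (Hright : forall c p,
    Rabs (tent sg rho c (y - p) - tent sg rho c (z - p)) <= sg * Rabs (y - z)).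
  { intros c p. replace (Rabs (y - z)) with (Rabs ((y - p) - (z - p))) by (f_equal; ring).
    apply tent_dist_le; lra. }
  repeat apply Rmax_dist_le; auto.
  replace (f y - tau - (f z - tau)) with (f y - f z) by ring.
  eapply Rle_trans; [apply Hlip; auto|]. apply Rmult_le_compat_r; [apply Rabs_pos|lra].
Qed.

Lemma lipschitz_between x p : a <= x <= b -> a <= p <= b ->
  f p - L * Rabs (x - p) <= f x <= f p + L * Rabs (x - p).
Proof. intros Hx Hp. assert (H := Hlip x p Hx Hp). apply Rabs_le_between in H. lra. Qed.

Lemma sculpt_close x : a <= x <= b -> Rabs (g x - f x) <= tau.
Proof.
  intros Hx. assert (Hsg : 0 <= sg) by lra.
  assert (0 <= (sg + L) * rho) by (apply Rmult_le_pos; lra).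
  destruct (sculpt_ge x) as [Hf _].
  assert (Hg : g x <= f x + tau).
  { assert (Hp : forall c p v, a <= p <= b -> f p = c -> Rabs v = Rabs (x - p) ->
      tent sg rho c v <= f x + tau).
    { intros c p v Hp Hc Hv. apply (tent_le_lipschitz_bound _ _ _ Hsg L); try lra.
      rewrite Hv, <- Hc. apply lipschitz_between; auto. }
    apply sculpt_le; [lra|apply (Hp c0 a)|apply (Hp kappa tm)|apply (Hp kappa tp)|apply (Hp c0 b)];
      solve [lra | auto | apply Rabs_minus_sym]. }
  apply Rabs_le; lra.
Qed.

Lemma sculpt_near_a x : a <= x <= a + rho -> g x = c0 - sg * (x - a).
Proof.
  intros Hx. assert (Hfx := lipschitz_between x a ltac:(lra) ltac:(lra)).
  rewrite Hfa, Rabs_pos_eq in Hfx by lra.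
  destruct (sculpt_ge x) as (_ & Ha & _). rewrite tent_rise in Ha by lra.
  assert ((sg + L) * (x - a) <= (sg + L) * rho) by (apply Rmult_le_compat_l; lra).
  assert (sg * (x - a) <= sg * rho) by (apply sg_mul_le; lra).
  assert (sg * (2 * x - a - b) <= sg * 0) by (apply sg_mul_le; lra).
  apply Rle_antisym; [|lra].
  apply sculpt_le; [lra|apply tent_le; (left; lra) || (right; lra)..].
Qed.

Lemma sculpt_near_tm x : tm - rho <= x <= tm + rho -> g x = kappa - sg * (x - tm).
Proof.
  intros Hx. assert (Hfx := lipschitz_between x tm ltac:(lra) ltac:(lra)).
  rewrite Hftm in Hfx. destruct (sculpt_ge x) as (_ & _ & Htm & _).
  rewrite tent_rise in Htm by lra.
  assert (Habs : Rabs (x - tm) <= rho) by (apply Rabs_le; lra).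
  assert ((sg + L) * Rabs (x - tm) <= (sg + L) * rho) by (apply Rmult_le_compat_l; lra).
  assert (sg * (x - tm) <= sg * Rabs (x - tm)) by (apply sg_mul_le, Rle_abs).
  assert (sg * d <= sg * (tm - a)) by (apply sg_mul_le; lra).
  assert (sg * (2 * x - tm - tp) <= sg * 0) by (apply sg_mul_le; lra).
  assert (sg * d <= sg * (b + tm - 2 * x)) by (apply sg_mul_le; lra).
  apply Rle_antisym; [|lra].
  apply sculpt_le; [lra|apply tent_le; left; lra..].
Qed.

Lemma sculpt_near_tp x : tp - rho <= x <= tp + rho -> g x = kappa + sg * (x - tp).
Proof.
  intros Hx. assert (Hfx := lipschitz_between x tp ltac:(lra) ltac:(lra)).
  rewrite Hftp in Hfx. destruct (sculpt_ge x) as (_ & _ & _ & Htp & _).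
  rewrite tent_rise in Htp by lra.
  assert (Habs : Rabs (x - tp) <= rho) by (apply Rabs_le; lra).
  assert ((sg + L) * Rabs (x - tp) <= (sg + L) * rho) by (apply Rmult_le_compat_l; lra).
  assert (sg * (tp - x) <= sg * Rabs (x - tp))
    by (apply sg_mul_le; rewrite Rabs_minus_sym; apply Rle_abs).
  assert (sg * d <= sg * (2 * x - a - tp)) by (apply sg_mul_le; lra).
  assert (sg * (tm + tp - 2 * x) <= sg * 0) by (apply sg_mul_le; lra).
  assert (sg * d <= sg * (b - tp)) by (apply sg_mul_le; lra).
  apply Rle_antisym; [|lra].
  apply sculpt_le; [lra|apply tent_le; left; lra..].
Qed.

Lemma sculpt_near_b x : b - rho <= x <= b -> g x = c0 + sg * (x - b).
Proof.
  intros Hx. assert (Hfx := lipschitz_between x b ltac:(lra) ltac:(lra)).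
  rewrite Hfb, Rabs_left1 in Hfx by lra.
  destruct (sculpt_ge x) as (_ & _ & _ & _ & Hb). rewrite tent_rise in Hb by lra.
  assert ((sg + L) * (b - x) <= (sg + L) * rho) by (apply Rmult_le_compat_l; lra).
  assert (sg * (b - x) <= sg * rho) by (apply sg_mul_le; lra).
  assert (sg * (a + b - 2 * x) <= sg * 0) by (apply sg_mul_le; lra).
  apply Rle_antisym; [|lra].
  apply sculpt_le; [lra|apply tent_le; (left; lra) || (right; lra)..].
Qed.

Lemma sculpt_below_c0 x : a + rho / 2 <= x <= b - rho / 2 -> g x <= c0 - sg * rho / 2.
Proof.
  intros Hx. assert (f x < c0) by (apply Hf_c0; lra).
  assert (0 <= L * rho) by (apply Rmult_le_pos; lra).
  assert (sg * (rho / 2) <= sg * (x - a)) by (apply sg_mul_le; lra).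
  assert (sg * (rho / 2) <= sg * (b - x)) by (apply sg_mul_le; lra).
  apply sculpt_le; [lra|apply tent_le; (left; lra) || (right; lra)..].
Qed.

Lemma sculpt_below_kappa x : tm + rho / 2 <= x <= tp - rho / 2 -> g x <= kappa - sg * rho / 2.
Proof.
  intros Hx. assert (f x < kappa) by (apply Hf_kappa; lra).
  assert (0 <= L * rho) by (apply Rmult_le_pos; lra).
  assert (sg * d <= sg * (x - a)) by (apply sg_mul_le; lra).
  assert (sg * (rho / 2) <= sg * (x - tm)) by (apply sg_mul_le; lra).
  assert (sg * (rho / 2) <= sg * (tp - x)) by (apply sg_mul_le; lra).
  assert (sg * d <= sg * (b - x)) by (apply sg_mul_le; lra).
  apply sculpt_le; [lra|apply tent_le; left; lra..].
Qed.

Lemma sculpt_smoothing : exists ft psim psip, smooth ft /\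
  tm - rho / 2 < psim < tm + rho / 2 /\ tp - rho / 2 < psip < tp + rho / 2 /\
  transversal_well ft a b c0 /\ transversal_well ft psim psip kappa /\
  forall z, a <= z <= b -> Rabs (f z - ft z) <= tau + sg * rho / 4 /\ Rabs (Derive ft z) <= sg.
Proof.
  destruct (profile_smoothing (sculpt f a tm tp b c0 kappa sg rho tau) a tm tp b c0 kappa sg rho)
    as (ft & psim & psip & Hs & Hpsim & Hpsip & W1 & W2 & Happ); try lra.
  - apply sculpt_lipschitz.
  - apply sculpt_near_a.
  - apply sculpt_near_tm.
  - apply sculpt_near_tp.
  - apply sculpt_near_b.
  - apply sculpt_below_c0.
  - apply sculpt_below_kappa.
  - exists ft, psim, psip; repeat (split; [assumption|]).
    intros z Hz. destruct (Happ z Hz) as [H1 H2]; split; [|exact H2].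
    assert (H3 := sculpt_close z Hz).
    replace (f z - ft z) with ((sculpt f a tm tp b c0 kappa sg rho tau z - ft z)
      - (sculpt f a tm tp b c0 kappa sg rho tau z - f z)) by ring.
    eapply Rle_trans; [apply Rabs_triang|]. rewrite Rabs_Ropp, Rabs_minus_sym. lra.
Qed.

End Sculpture.

Lemma small_parameter_exists sg L tau d K : 0 <= sg -> 0 <= L -> 0 < tau -> 0 < d -> 0 < K ->
  exists rho, 0 < rho /\ (sg + L) * rho <= tau /\ 2 * rho <= d /\ 4 * (sg * rho) <= K.
Proof.
  intros Hsg HL Htau Hd HK.
  set (q := Rmin tau (Rmin d K)).
  assert (Hq : 0 < q /\ q <= tau /\ q <= d /\ q <= K)
    by (unfold q, Rmin; repeat destruct Rle_dec; lra).
  exists (q / (4 * (sg + L + 1))).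
  assert (E : q / (4 * (sg + L + 1)) * (4 * (sg + L + 1)) = q) by (field; lra).
  assert (0 < q / (4 * (sg + L + 1))) by (apply Rdiv_lt_0_compat; lra).
  repeat split; nra.
Qed.

Theorem lemma3p2 (f : R -> R) (phim phip : R) :
  locally_lipschitz f ->
  phim < 0 -> 0 < phip ->
  f phip = f phim ->
  (forall z, phim < z < phip -> f z - f phip < 0) ->
  forall kappa : R, f 0 < kappa < f phip ->
  exists Rc : R, 0 < Rc /\
  forall delta : R, 0 < delta < kappa - f 0 ->
  exists (ft : R -> R) (psim psip : R),
    smooth ft /\
    phim < psim < phip /\ phim < psip < phip /\ psim < 0 /\ 0 < psip /\
    (* (i) *)
    ft phip = ft phim /\ Derive ft phip <> 0 /\ Derive ft phim <> 0 /\
    (forall z, phim < z < phip -> ft z - ft phip < 0) /\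
    (* (ii) *)
    ft psip = kappa /\ ft psim = kappa /\
    Derive ft psip <> 0 /\ Derive ft psim <> 0 /\
    (forall z, psim < z < psip -> ft z - ft psip < 0) /\
    (* (iii) *)
    (forall z, phim <= z <= phip ->
       Rabs (f z - ft z) < delta /\ Rabs (Derive ft z) < Rc).
Proof.
  intros Hloc Hm Hp Hfeq Hf kappa [Hk0 Hk].
  destruct (locally_lipschitz_lipschitz_on f phim phip Hloc ltac:(lra)) as [L [HL Hlip]].
  destruct (level_crossings f phim phip L kappa) as (tm & tp & Htm & Htp & Ftm & Ftp & Hbelow);
    auto; try lra.
  set (d := Rmin (Rmin (tm - phim) (- tm)) (Rmin tp (phip - tp))).
  assert (Hd : 0 < d /\ d <= tm - phim /\ d <= - tm /\ d <= tp /\ d <= phip - tp)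
    by (unfold d, Rmin; repeat destruct Rle_dec; lra).
  set (sg := L + 1 + 2 * (f phip - kappa) / d).
  assert (Hsg : L + 1 <= sg /\ 2 * (f phip - kappa) <= sg * d).
  { assert (E : 2 * (f phip - kappa) / d * d = 2 * (f phip - kappa)) by (field; lra).
    assert (0 <= 2 * (f phip - kappa) / d) by (apply Rdiv_le_0_compat; lra). unfold sg; nra. }
  exists (sg + 1); split; [lra|]. intros delta [Hdelta _].
  destruct (small_parameter_exists sg L (delta / 4) d (f phip - kappa))
    as (rho & Hrho & Hrho_tau & Hrho_d & Hrho_K); try lra.
  destruct (sculpt_smoothing f phim tm tp phip (f phip) kappa L sg rho (delta / 4) d)
    as (ft & psim & psip & Hs & Hpsim & Hpsip & W1 & W2 & Happ); auto; try lra.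
  { intros x Hx. assert (H := Hf x Hx). lra. }
  destruct W1 as (Wa & Wb & Wda & Wdb & Wlt), W2 as (Wm & Wp & Wdm & Wdp & Wlt').
  exists ft, psim, psip.
  assert (Hsr : 0 <= L * rho) by (apply Rmult_le_pos; lra).
  repeat split; try solve [auto | lra | congruence].
  - intros z Hz. rewrite Wb. assert (Hz' := Wlt z Hz). lra.
  - intros z Hz. rewrite Wp. assert (Hz' := Wlt' z Hz). lra.
  - destruct (Happ z ltac:(assumption)). lra.
  - destruct (Happ z ltac:(assumption)). lra.
Qed.
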